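(* Let $\mathcal{J}$ be a small category. If $\mathsf{pMet}$ and $\mathsf{sCpx}$ both admit limits (respectively colimits) of all $\mathcal{J}$-shaped diagrams, then so does $\mathsf{pSMT}$. If $\mathsf{Met}$ and $\mathsf{sCpx}$ both admit limits of all $\mathcal{J}$-shaped diagrams, then so does $\mathsf{SMT}$. In particular, $\mathsf{pSMT}$ admits finite products and finite coproducts, and $\mathsf{SMT}$ admits finite products.
   Context: $\mathsf{Met}$ is the category whose objects are metric spaces and whose morphisms are short (i.e. 1-Lipschitz) maps. $\mathsf{pMet}$ is the category of extended pseudo-metric spaces (distance function with values in $[0,\infty]$, symmetric, satisfying the triangle inequality, $d(x,x)=0$, but distinct points may be at distance $0$) with short maps. $\mathsf{sCpx}$ is the category of abstract simplicial complexes (a vertex set $K^0$ together with a family $K$ of nonempty finite subsets of $K^0$ containing all singletons and closed under passing to nonempty subsets) with simplicial maps (functions on vertex sets sending simplices to simplices). The category $\mathsf{SMT}$ of simplicial metric thickenings has objects the triples $(X,K,\phi)$ with $X$ a metric space, $K$ an abstract simplicial complex and $\phi\colon X\to K^0$ a bijection, and morphisms $(X,K,\phi)\to(Y,L,\psi)$ the pairs $(f,g)$ with $f\colon X\to Y$ short, $g\colon K\to L$ simplicial, and $\psi\circ f=g|_{K^0}\circ\phi$ (this is the restricted comma category of the forgetful functor $U\colon\mathsf{Met}\to\mathsf{Set}$ and the vertex-set functor $(-)^0\colon\mathsf{sCpx}\to\mathsf{Set}$, i.e. the full subcategory of the comma category on objects whose structure map is a bijection). $\mathsf{pSMT}$ is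 defined identically with $X$ allowed to be an extended pseudo-metric space. *)

From HB Require Import structures.
From mathcomp Require Import all_boot all_order all_algebra.
From mathcomp Require Import boolp classical_sets functions cardinality.
From mathcomp Require Import reals constructive_ereal Rstruct.
From Stdlib Require Import ProofIrrelevance.

Set Implicit Arguments.
Unset Strict Implicit.
Unset Printing Implicit Defensive.
Import Order.TTheory GRing.Theory Num.Theory.
Local Open Scope classical_set_scope.

Record Category := {
  ob :> Type;
  hom : ob -> ob -> Type;
  idm : forall a, hom a a;
  comp : forall a b c, hom b c -> hom a b -> hom a c;
  comp_idl : forall a b (f : hom a b), comp (idm b) f = f;
  comp_idr : forall a b (f : hom a b), comp f (idm a) = f;
  comp_assoc : forall a b c d (f : hom a b) (g : hom b c) (h : hom c d),
      comp h (comp g f) = comp (comp h g) f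
}.
Arguments hom {C} a b : rename.
Arguments idm {C} a : rename.
Arguments comp {C a b c} g f : rename.

(* Small categories: a separate record, so that its universe of objects
   and morphisms is independent of (smaller than) that of the categories
   of spaces. These are the index shapes J. *)
Record SmallCat := {
  sob :> Type;
  shom : sob -> sob -> Type;
  sidm : forall i, shom i i;
  scomp : forall i j k, shom j k -> shom i j -> shom i k;
  scomp_idl : forall i j (u : shom i j), scomp (sidm j) u = u;
  scomp_idr : forall i j (u : shom i j), scomp u (sidm i) = u;
  scomp_assoc : forall i j k l (u : shom i j) (v : shom j k) (w : shom k l),
      scomp w (scomp v u) = scomp (scomp w v) u
}.
Arguments shom {J} i j : rename.
Arguments sidm {J} i : rename.
Arguments scomp {J i j k} v u : rename.

Record Diagram (J : SmallCat) (C : Category) := {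
  dob :> J -> C;
  dmap : forall i j, shom i j -> hom (dob i) (dob j);
  dmap_id : forall i, dmap (sidm i) = idm (dob i);
  dmap_comp : forall i j k (u : shom i j) (v : shom j k),
      dmap (scomp v u) = comp (dmap v) (dmap u)
}.
Arguments dmap {J C} F {i j} u : rename.

Section Limits.
Variables (J : SmallCat) (C : Category) (F : Diagram J C).

Definition is_cone (c : C) (leg : forall j, hom c (F j)) : Prop :=
  forall i j (u : shom i j), comp (dmap F u) (leg i) = leg j.

Definition is_cocone (c : C) (leg : forall j, hom (F j) c) : Prop :=
  forall i j (u : shom i j), comp (leg j) (dmap F u) = leg i.

Definition is_limit (c : C) (leg : forall j, hom c (F j)) : Prop :=
  is_cone leg /\
  forall (d : C) (leg' : forall j, hom d (F j)), is_cone leg' ->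
    exists! h : hom d c, forall j, comp (leg j) h = leg' j.

Definition is_colimit (c : C) (leg : forall j, hom (F j) c) : Prop :=
  is_cocone leg /\
  forall (d : C) (leg' : forall j, hom (F j) d), is_cocone leg' ->
    exists! h : hom c d, forall j, comp h (leg j) = leg' j.

Definition has_limit : Prop :=
  exists (c : C) (leg : forall j, hom c (F j)), is_limit leg.
Definition has_colimit : Prop :=
  exists (c : C) (leg : forall j, hom (F j) c), is_colimit leg.
End Limits.

Definition has_limits_of_shape (J : SmallCat) (C : Category) : Prop :=
  forall F : Diagram J C, has_limit F.
Definition has_colimits_of_shape (J : SmallCat) (C : Category) : Prop :=
  forall F : Diagram J C, has_colimit F.

(* The discrete category on {0,...,n-1}; finite (co)products are
   (co)limits of diagrams of these shapes, for every n (n = 0 gives the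
   terminal / initial object). *)
Definition discrete_cat (n : nat) : SmallCat.
Proof.
refine {| sob := 'I_n; shom := fun i j => i = j;
          sidm := fun i => erefl i;
          scomp := fun i j k v u => etrans u v |}.
all: move=> *; exact: eq_irrelevance.
Defined.

Definition has_finite_products (C : Category) : Prop :=
  forall n, has_limits_of_shape (discrete_cat n) C.
Definition has_finite_coproducts (C : Category) : Prop :=
  forall n, has_colimits_of_shape (discrete_cat n) C.

Section SubCat.
Variables (O : Type) (H : O -> O -> Type) (hid : forall a, H a a)
  (hcomp : forall a b c, H b c -> H a b -> H a c)
  (hidl : forall a b (f : H a b), hcomp (hid b) f = f)
  (hidr : forall a b (f : H a b), hcomp f (hid a) = f)
  (hassoc : forall a b c d (f : H a b) (g : H b c) (h : H c d),
      hcomp h (hcomp g f) = hcomp (hcomp h g) f)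
  (P : forall a b, H a b -> Prop)
  (Pid : forall a, P (hid a))
  (Pcomp : forall a b c (g : H b c) (f : H a b), P g -> P f -> P (hcomp g f)).

Definition subcat : Category.
Proof.
refine {| ob := O; hom := fun a b => {f : H a b | P f};
          idm := fun a => exist _ (hid a) (Pid a);
          comp := fun a b c g f =>
            exist _ (hcomp (proj1_sig g) (proj1_sig f))
              (Pcomp (proj2_sig g) (proj2_sig f)) |}.
- move=> a b [f pf] /=; apply: eq_exist_uncurried; exists (hidl f).
  exact: proof_irrelevance.
- move=> a b [f pf] /=; apply: eq_exist_uncurried; exists (hidr f).
  exact: proof_irrelevance.
- move=> a b c d [f pf] [g pg] [h ph] /=; apply: eq_exist_uncurried.
  exists (hassoc f g h); exact: proof_irrelevance.
Defined.
End SubCat.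

Local Open Scope ereal_scope.
Notation R := Rdefinitions.R.

Record pmet := {
  pcarrier :> Type;
  dist : pcarrier -> pcarrier -> \bar R;
  dist_ge0 : forall x y, 0 <= dist x y;
  dist_self : forall x, dist x x = 0;
  dist_sym : forall x y, dist x y = dist y x;
  dist_tri : forall x y z, dist x z <= dist x y + dist y z
}.

Definition is_metric (X : pmet) : Prop :=
  (forall x y : X, dist x y \is a fin_num) /\
  (forall x y : X, dist x y = 0 -> x = y).

Definition short (X Y : pmet) (f : X -> Y) : Prop :=
  forall x x', dist (f x) (f x') <= dist x x'.

Lemma short_id (X : pmet) : short (fun x : X => x).
Proof. by move=> x x'. Qed.

Lemma short_comp (X Y Z : pmet) (g : Y -> Z) (f : X -> Y) :
  short g -> short f -> short (fun x => g (f x)).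
Proof. by move=> sg sf x x'; apply: le_trans (sg _ _) (sf _ _). Qed.

Definition pMet : Category :=
  @subcat pmet (fun X Y => X -> Y) (fun X x => x) (fun X Y Z g f x => g (f x))
    (fun _ _ _ => erefl) (fun _ _ _ => erefl) (fun _ _ _ _ _ _ _ => erefl)
    (fun X Y f => short f) short_id (fun X Y Z g f => @short_comp X Y Z g f).

Record met := { mspace :> pmet; mspace_metric : is_metric mspace }.

Definition Met : Category :=
  @subcat met (fun X Y : met => X -> Y) (fun (X : met) (x : X) => x)
    (fun (X Y Z : met) (g : Y -> Z) (f : X -> Y) x => g (f x))
    (fun _ _ _ => erefl) (fun _ _ _ => erefl) (fun _ _ _ _ _ _ _ => erefl)
    (fun X Y f => short f) (fun X : met => @short_id X)
    (fun X Y Z g f => @short_comp X Y Z g f).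
Local Close Scope ereal_scope.

Record scpx := {
  vertices :> Type;
  simplex : set (set vertices);
  simplex_nonempty : forall s, simplex s -> s !=set0;
  simplex_finite : forall s, simplex s -> finite_set s;
  simplex_single : forall v, simplex [set v];
  simplex_sub : forall s t, simplex s -> t `<=` s -> t !=set0 -> simplex t
}.

Definition simplicial (K L : scpx) (g : K -> L) : Prop :=
  forall s, simplex s -> simplex (g @` s).

Lemma simplicial_id (K : scpx) : simplicial (fun v : K => v).
Proof. by move=> s Ks; rewrite image_id. Qed.

Lemma simplicial_comp (K L M : scpx) (g : L -> M) (f : K -> L) :
  simplicial g -> simplicial f -> simplicial (fun v => g (f v)).
Proof. by move=> sg sf s Ks; rewrite -(image_comp f g); apply/sg/sf. Qed.

Definition sCpx : Category :=
  @subcat scpx (fun K L => K -> L) (fun K v => v) (fun K L M g f v => g (f v))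
    (fun _ _ _ => erefl) (fun _ _ _ => erefl) (fun _ _ _ _ _ _ _ => erefl)
    (fun K L g => simplicial g) simplicial_id
    (fun K L M g f => @simplicial_comp K L M g f).

Record psmt := {
  pt_space : pmet;
  pt_cpx : scpx;
  pt_phi : pt_space -> pt_cpx;
  pt_phi_bij : bijective pt_phi
}.

Definition psmt_mor (A B : psmt) (fg : (pt_space A -> pt_space B) *
                                       (pt_cpx A -> pt_cpx B)) : Prop :=
  [/\ short fg.1, simplicial fg.2 &
      forall x, @pt_phi B (fg.1 x) = fg.2 (@pt_phi A x)].

Lemma psmt_mor_id (A : psmt) : psmt_mor (A := A) (B := A) (id, id).
Proof. by split; [exact: short_id | exact: simplicial_id | ]. Qed.

Lemma psmt_mor_comp (A B C : psmt) gg ff :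
  psmt_mor (A := B) (B := C) gg -> psmt_mor (A := A) (B := B) ff ->
  psmt_mor (A := A) (B := C) (gg.1 \o ff.1, gg.2 \o ff.2).
Proof.
case=> sg1 sg2 cg [sf1 sf2 cf]; split.
- exact: short_comp.
- exact: simplicial_comp.
- by move=> x /=; rewrite cg cf.
Qed.

Lemma pair_idl (A B : psmt)
  (f : (pt_space A -> pt_space B) * (pt_cpx A -> pt_cpx B)) :
  (id \o f.1, id \o f.2) = f.
Proof. by case: f. Qed.

Lemma pair_idr (A B : psmt)
  (f : (pt_space A -> pt_space B) * (pt_cpx A -> pt_cpx B)) :
  (f.1 \o id, f.2 \o id) = f.
Proof. by case: f. Qed.

Definition pSMT : Category :=
  @subcat psmt
    (fun A B => ((pt_space A -> pt_space B) * (pt_cpx A -> pt_cpx B))%type)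
    (fun A => (id, id))
    (fun A B C gg ff => (gg.1 \o ff.1, gg.2 \o ff.2))
    pair_idl pair_idr
    (fun _ _ _ _ f g h => erefl)
    psmt_mor psmt_mor_id psmt_mor_comp.

Record smt := { smt_psmt :> psmt; smt_metric : is_metric (pt_space smt_psmt) }.

Definition SMT : Category :=
  @subcat smt
    (fun A B => ((pt_space A -> pt_space B) * (pt_cpx A -> pt_cpx B))%type)
    (fun A => (id, id))
    (fun A B C gg ff => (gg.1 \o ff.1, gg.2 \o ff.2))
    (fun A B : smt => @pair_idl A B) (fun A B : smt => @pair_idr A B)
    (fun _ _ _ _ f g h => erefl)
    (fun A B => @psmt_mor A B) (fun A : smt => @psmt_mor_id A)
    (fun A B C => @psmt_mor_comp A B C).

(* A thickening is a triple (X, K, phi) with phi : X -> K^0 a bijection, and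
   pSMT is the restricted comma category of the forgetful functors of pMet and
   sCpx into types.  The forgetful functors of pMet, Met and sCpx preserve
   limits (they are represented by a point) and those of pMet and sCpx also
   preserve colimits (they have codiscrete right adjoints).  Hence, given a
   (co)limit LX of the spaces and LK of the complexes of a diagram of
   thickenings, the natural bijections phi induce a comparison bijection
   LX -> LK between the underlying (co)limits of types, and the resulting
   thickening is a (co)limit in pSMT; for SMT the same construction applies
   with a metric LX. *)
From Pilot Require Import Defs.
From mathcomp Require Import all_boot all_order all_algebra.
From mathcomp Require Import boolp classical_sets cardinality.
From mathcomp Require Import constructive_ereal Rstruct.
Import Defs.

Set Implicit Arguments.
Unset Strict Implicit.
Unset Printing Implicit Defensive.
Import Order.TTheory.
Local Open Scope classical_set_scope.

Lemma sig_eq (A : Type) (P : A -> Prop) (f g : {x | P x}) :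
  proj1_sig f = proj1_sig g -> f = g.
Proof. by case: f g => [f pf] [g pg] /= fg; apply: eq_exist. Qed.

Section LimitLegs.
Variables (J : SmallCat) (C : Category) (F : Diagram J C).

Lemma limit_legs_monic (L : C) (leg : forall j, hom L (F j)) :
  is_limit leg -> forall d (f g : hom d L),
  (forall j, comp (leg j) f = comp (leg j) g) -> f = g.
Proof.
move=> [cone univ] d f g efg.
have cone' : is_cone (fun j => comp (leg j) f).
  by move=> i j u; rewrite comp_assoc cone.
have [h [_ hu]] := univ d _ cone'.
by rewrite -(hu f (fun j => erefl)) (hu g (fun j => esym (efg j))).
Qed.

Lemma colimit_legs_epic (Cc : C) (leg : forall j, hom (F j) Cc) :
  is_colimit leg -> forall d (f g : hom Cc d),
  (forall j, comp f (leg j) = comp g (leg j)) -> f = g.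
Proof.
move=> [cocone univ] d f g efg.
have cocone' : is_cocone (fun j => comp f (leg j)).
  by move=> i j u; rewrite -comp_assoc cocone.
have [h [_ hu]] := univ d _ cocone'.
by rewrite -(hu f (fun j => erefl)) (hu g (fun j => esym (efg j))).
Qed.
End LimitLegs.

Section TypeLimits.
Variables (J : SmallCat) (T : J -> Type) (t : forall i j, shom i j -> T i -> T j).

Definition compatible (q : forall j, T j) : Prop :=
  forall i j (u : shom i j), t u (q i) = q j.

Definition type_limit (L : Type) (p : forall j, L -> T j) : Prop :=
  [/\ forall x, compatible (fun j => p j x),
      forall x y, (forall j, p j x = p j y) -> x = y &
      forall q, compatible q -> exists x, forall j, p j x = q j].

Definition type_colimit (Cc : Type) (e : forall j, T j -> Cc) : Prop :=
  [/\ forall i j (u : shom i j) x, e j (t u x) = e i x,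
      forall c, exists j x, e j x = c &
      forall (S : Type) (s : forall j, T j -> S),
        (forall i j (u : shom i j) x, s j (t u x) = s i x) ->
        exists h : Cc -> S, forall j x, h (e j x) = s j x].

Lemma type_limit_lift (L : Type) (p : forall j, L -> T j) : type_limit p ->
  forall (D : Type) (f : forall j, D -> T j), (forall y, compatible (f^~ y)) ->
  exists h : D -> L, forall j y, p j (h y) = f j y.
Proof.
case=> _ _ realise D f fc.
have [h hE] := choice (fun y => realise _ (fc y)).
by exists h => j y; rewrite hE.
Qed.
End TypeLimits.

Section DiscreteTypeLimits.
Variables (n : nat) (T : 'I_n -> Type)
  (t : forall i j : discrete_cat n, shom i j -> T i -> T j)
  (t_id : forall i x, t (sidm i) x = x).

Lemma discrete_type_compatible (q : forall i, T i) : compatible t q.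
Proof. by move=> i j u; change (i = j) in u; case: j / u; exact: t_id. Qed.

Lemma discrete_product : type_limit t (fun j (x : forall i, T i) => x j).
Proof.
split=> [x|x y exy|q _]; first exact: discrete_type_compatible.
  exact: functional_extensionality_dep.
by exists q.
Qed.

Lemma discrete_coproduct : type_colimit t (fun j x => Tagged T x).
Proof.
split=> [i j u x|[j x]|S s _].
- by change (i = j) in u; case: j / u; rewrite t_id.
- by exists j, x.
- by exists (fun c => s (tag c) (tagged c)).
Qed.
End DiscreteTypeLimits.

(* A concrete category: objects carry a type, morphisms are the functions
   satisfying a property closed under identities and composition. pMet, Met
   and sCpx are (definitionally) of this form. *)
Section Concrete.
Variables (O : Type) (car : O -> Type)
  (P : forall a b : O, (car a -> car b) -> Prop)
  (P_id : forall a, P (fun x : car a => x))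
  (P_comp : forall a b c (g : car b -> car c) (f : car a -> car b),
     P g -> P f -> P (fun x => g (f x))).

Definition concrete_cat : Category :=
  @subcat O (fun a b => car a -> car b) (fun a x => x)
    (fun a b c g f x => g (f x)) (fun _ _ _ => erefl) (fun _ _ _ => erefl)
    (fun _ _ _ _ _ _ _ => erefl) P P_id P_comp.
Local Notation C := concrete_cat.

Lemma concrete_hom_eq (a b : C) (f g : hom a b) :
  proj1_sig f =1 proj1_sig g -> f = g.
Proof. by move=> fg; apply/sig_eq/funext. Qed.

Variable J : SmallCat.

Definition underlying (G : Diagram J C) :
  forall i j, shom i j -> car (G i) -> car (G j) :=
  fun i j u => proj1_sig (dmap G u).
Arguments underlying : clear implicits.

Definition lifts_limit (G : Diagram J C) (L : C)
    (p : forall j, car L -> car (G j)) : Prop :=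
  forall d (h : car d -> car L), (forall j, P (fun x => p j (h x))) -> P h.

Definition lifts_colimit (G : Diagram J C) (Cc : C)
    (e : forall j, car (G j) -> car Cc) : Prop :=
  forall d (h : car Cc -> car d), (forall j, P (fun x => h (e j x))) -> P h.

Section FromTypes.
Variable G : Diagram J C.

Lemma concrete_limit (L : C) (p : forall j, car L -> car (G j))
  (pP : forall j, P (p j)) :
  type_limit (underlying G) p -> lifts_limit p ->
  is_limit (fun j => exist _ (p j) (pP j) : hom L (G j)).
Proof.
move=> lim lift; have [cone inj _] := lim; split.
  by move=> i j u; apply: concrete_hom_eq => x; exact: cone.
move=> d leg' cone'.
have [h hE] := type_limit_lift lim (f := fun j => proj1_sig (leg' j))
  (fun y i j u => congr1 (fun f => proj1_sig f y) (cone' i j u)).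
have hP : P h.
  apply: lift => j; rewrite (funext (hE j)); exact: proj2_sig.
exists (exist _ h hP); split=> [j|h' h'E].
  by apply: concrete_hom_eq => y; exact: hE.
apply: concrete_hom_eq => y; apply: inj => j.
by rewrite hE -(h'E j).
Qed.

Lemma concrete_colimit (Cc : C) (e : forall j, car (G j) -> car Cc)
  (eP : forall j, P (e j)) :
  type_colimit (underlying G) e -> lifts_colimit e ->
  is_colimit (fun j => exist _ (e j) (eP j) : hom (G j) Cc).
Proof.
move=> [cocone surj factor] lift; split.
  by move=> i j u; apply: concrete_hom_eq => x; exact: cocone.
move=> d leg' cocone'.
have [h hE] := factor _ (fun j => proj1_sig (leg' j))
  (fun i j u x => congr1 (fun f => proj1_sig f x) (cocone' i j u)).
have hP : P h.
  apply: lift => j; rewrite (funext (hE j)); exact: proj2_sig.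
exists (exist _ h hP); split=> [j|h' h'E].
  by apply: concrete_hom_eq => x; exact: hE.
apply: concrete_hom_eq => c; have [j [x <-]] := surj c.
by rewrite /= hE -(h'E j).
Qed.
End FromTypes.

Section ToTypesLimit.
Variables (pt : C) (pt0 : car pt)
  (P_const : forall b (y : car b), P (fun _ : car pt => y)).

Lemma limit_type_limit (G : Diagram J C) (L : C) (leg : forall j, hom L (G j)) :
  is_limit leg ->
  type_limit (underlying G) (fun j => proj1_sig (leg j)) /\
  lifts_limit (fun j => proj1_sig (leg j)).
Proof.
move=> lim; have [cone univ] := lim.
pose const b (y : car b) : hom pt b := exist _ (fun _ => y) (P_const y).
have cone_pt x : compatible (underlying G) (fun j => proj1_sig (leg j) x).
  by move=> i j u; rewrite /underlying -(cone i j u).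
have inj x y : (forall j, proj1_sig (leg j) x = proj1_sig (leg j) y) -> x = y.
  move=> exy; have: const _ x = const _ y.
    by apply: (limit_legs_monic lim) => j; apply: concrete_hom_eq => ? /=.
  by move/(congr1 (fun f => proj1_sig f pt0)).
split; first split=> // q qc.
  have cone_q : is_cone (fun j => const _ (q j)).
    by move=> i j u; apply: concrete_hom_eq => ? /=; exact: qc.
  have [h [hE _]] := univ pt _ cone_q.
  exists (proj1_sig h pt0) => j.
  by rewrite -[RHS]/(proj1_sig (const _ (q j)) pt0) -hE.
move=> d h hP; pose leg' j : hom (d : C) (G j) := exist _ _ (hP j).
have cone' : is_cone leg'.
  by move=> i j u; apply: concrete_hom_eq => x /=; exact: cone_pt.
have [m [mE _]] := univ d leg' cone'.
suff <- : proj1_sig m = h by exact: proj2_sig.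
apply: funext => x; apply: inj => j.
by rewrite -[RHS]/(proj1_sig (leg' j) x) -mE.
Qed.
End ToTypesLimit.

Section ToTypesColimit.
Variables (codisc : Type -> C) (into : forall S, S -> car (codisc S))
  (out : forall S, car (codisc S) -> S)
  (intoK : forall S, cancel (@into S) (@out S))
  (P_codisc : forall a S (f : car a -> car (codisc S)), P f).

Lemma colimit_type_colimit (G : Diagram J C) (Cc : C)
  (leg : forall j, hom (G j) Cc) :
  is_colimit leg ->
  type_colimit (underlying G) (fun j => proj1_sig (leg j)) /\
  lifts_colimit (fun j => proj1_sig (leg j)).
Proof.
move=> colim; have [cocone univ] := colim.
pose to S (h : car Cc -> S) : hom Cc (codisc S) :=
  exist _ (fun c => into (h c)) (P_codisc _).
have cocone_pt i j (u : shom i j) x :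
    proj1_sig (leg j) (proj1_sig (dmap G u) x) = proj1_sig (leg i) x.
  by rewrite -(cocone i j u).
have ext S (h1 h2 : car Cc -> S) :
    (forall j x, h1 (proj1_sig (leg j) x) = h2 (proj1_sig (leg j) x)) ->
    h1 = h2.
  move=> eh; have E : to S h1 = to S h2.
    apply: (colimit_legs_epic colim) => j.
    by apply: concrete_hom_eq => x /=; rewrite eh.
  apply: funext => c; rewrite -[h1 c]intoK -[h2 c]intoK; congr out.
  exact: (congr1 (fun f => proj1_sig f c) E).
have surj c : exists j x, proj1_sig (leg j) x = c.
  have E := ext Prop (fun c => exists j x, proj1_sig (leg j) x = c)
    (fun _ => True)
    (fun j x => propT (ex_intro _ j (ex_intro _ x erefl))).
  by rewrite (congr1 (@^~ c) E).
split; first split=> // S s sc.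
  pose leg' j : hom (G j) (codisc S) :=
    exist _ (fun x => into (s j x)) (P_codisc _).
  have cocone' : is_cocone leg'.
    by move=> i j u; apply: concrete_hom_eq => x /=; rewrite -[in RHS](sc i j u).
  have [h [hE _]] := univ _ leg' cocone'.
  exists (fun c => out (proj1_sig h c)) => j x.
  by rewrite -[proj1_sig h _]/(proj1_sig (comp h (leg j)) x) hE intoK.
move=> d h hP; pose leg' j : hom (G j) (d : C) := exist _ _ (hP j).
have cocone' : is_cocone leg'.
  by move=> i j u; apply: concrete_hom_eq => x /=; rewrite cocone_pt.
have [m [mE _]] := univ d leg' cocone'.
suff <- : proj1_sig m = h by exact: proj2_sig.
apply: ext => j x.
by rewrite -[LHS]/(proj1_sig (comp m (leg j)) x) mE.
Qed.
End ToTypesColimit.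
End Concrete.
Arguments underlying {O car P P_id P_comp J} G.

Definition codisc_pmet (T : Type) : pmet.
Proof.
refine {| pcarrier := T; dist := fun _ _ => 0%E |}.
all: by move=> *; rewrite ?adde0.
Defined.

Definition point_met : met.
Proof. by exists (codisc_pmet unit); split=> // [[] []]. Defined.

Lemma short_const (X Y : pmet) (y : Y) : short (fun _ : X => y).
Proof. by move=> x x'; rewrite dist_self; exact: dist_ge0. Qed.

Lemma short_into_codisc (X : pmet) (T : Type) (f : X -> codisc_pmet T) :
  short f.
Proof. by move=> x x'; exact: dist_ge0. Qed.

Definition full_cpx (T : Type) : scpx.
Proof.
refine {| vertices := T; simplex := fun s => s !=set0 /\ finite_set s |}.
- by move=> s [].
- by move=> s [].
- by move=> v; split; [exists v | exact: finite_set1].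
- by move=> s t [_ fs] ts t0; split=> //; exact: sub_finite_set fs.
Defined.

Lemma simplicial_const (K L : scpx) (v : L) : simplicial (fun _ : K => v).
Proof.
move=> s /simplex_nonempty [x sx].
suff -> : (fun _ => v) @` s = [set v] by exact: simplex_single.
by apply/seteqP; split=> w /=; [case=> ? _ <- | move=> ->; exists x].
Qed.

Lemma simplicial_into_full (K : scpx) (T : Type) (f : K -> full_cpx T) :
  simplicial f.
Proof.
move=> s Ks; split; last exact/finite_image/simplex_finite.
by case: (simplex_nonempty Ks) => x sx; exists (f x), x.
Qed.

Section ConcreteInstances.
Variable J : SmallCat.

Lemma pMet_limit_types (G : Diagram J pMet) (L : pMet)
  (leg : forall j, hom L (G j)) : is_limit leg ->
  type_limit (underlying G) (fun j => proj1_sig (leg j)) /\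
  lifts_limit (fun j => proj1_sig (leg j)).
Proof.
exact: (@limit_type_limit pmet pcarrier (fun X Y f => short f) short_id
  (fun X Y Z g f => @short_comp X Y Z g f) J (codisc_pmet unit) tt
  (fun _ y => short_const y)).
Qed.

Lemma Met_limit_types (G : Diagram J Met) (L : Met)
  (leg : forall j, hom L (G j)) : is_limit leg ->
  type_limit (@underlying met (fun X => pcarrier X) _ _ _ _ G)
    (fun j => proj1_sig (leg j)) /\
  @lifts_limit met (fun X => pcarrier X) _ _ _ _ G L
    (fun j => proj1_sig (leg j)).
Proof.
exact: (@limit_type_limit met (fun X => pcarrier X) (fun X Y f => short f)
  (fun X : met => @short_id X) (fun X Y Z g f => @short_comp X Y Z g f) J
  point_met tt (fun _ y => short_const y)).
Qed.

Lemma sCpx_limit_types (G : Diagram J sCpx) (L : sCpx)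
  (leg : forall j, hom L (G j)) : is_limit leg ->
  type_limit (underlying G) (fun j => proj1_sig (leg j)) /\
  lifts_limit (fun j => proj1_sig (leg j)).
Proof.
exact: (@limit_type_limit scpx vertices (fun K L g => simplicial g)
  simplicial_id (fun K L M g f => @simplicial_comp K L M g f) J
  (full_cpx unit) tt (fun _ v => simplicial_const v)).
Qed.

Lemma pMet_colimit_types (G : Diagram J pMet) (Cc : pMet)
  (leg : forall j, hom (G j) Cc) : is_colimit leg ->
  type_colimit (underlying G) (fun j => proj1_sig (leg j)) /\
  lifts_colimit (fun j => proj1_sig (leg j)).
Proof.
exact: (@colimit_type_colimit pmet pcarrier (fun X Y f => short f) short_id
  (fun X Y Z g f => @short_comp X Y Z g f) J codisc_pmet (fun _ x => x)
  (fun _ x => x) (fun _ _ => erefl) (fun _ _ f => short_into_codisc f)).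
Qed.

Lemma sCpx_colimit_types (G : Diagram J sCpx) (Cc : sCpx)
  (leg : forall j, hom (G j) Cc) : is_colimit leg ->
  type_colimit (underlying G) (fun j => proj1_sig (leg j)) /\
  lifts_colimit (fun j => proj1_sig (leg j)).
Proof.
exact: (@colimit_type_colimit scpx vertices (fun K L g => simplicial g)
  simplicial_id (fun K L M g f => @simplicial_comp K L M g f) J full_cpx
  (fun _ v => v) (fun _ v => v) (fun _ _ => erefl)
  (fun _ _ f => simplicial_into_full f)).
Qed.
End ConcreteInstances.

Lemma phi_inv_spec (A : psmt) :
  {g : pt_cpx A -> pt_space A | cancel (@pt_phi A) g /\ cancel g (@pt_phi A)}.
Proof. by apply: cid; case: (pt_phi_bij A) => g *; exists g. Qed.

Definition phi_inv (A : psmt) : pt_cpx A -> pt_space A :=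
  proj1_sig (phi_inv_spec A).

Lemma phiK (A : psmt) : cancel (@pt_phi A) (@phi_inv A).
Proof. exact: (proj2_sig (phi_inv_spec A)).1. Qed.

Lemma phi_invK (A : psmt) : cancel (@phi_inv A) (@pt_phi A).
Proof. exact: (proj2_sig (phi_inv_spec A)).2. Qed.

Lemma psmt_hom_eq (A B : pSMT) (f g : hom A B) :
  (proj1_sig f).1 =1 (proj1_sig g).1 -> (proj1_sig f).2 =1 (proj1_sig g).2 ->
  f = g.
Proof.
move=> e1 e2; apply: sig_eq.
by case: (proj1_sig f) (proj1_sig g) e1 e2 => ? ? [? ?] /= /funext-> /funext->.
Qed.

Section Components.
Variables (J : SmallCat) (F : Diagram J pSMT).

Definition space_map :
  forall i j, shom i j -> pt_space (F i) -> pt_space (F j) :=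
  fun i j u => (proj1_sig (dmap F u)).1.
Definition cpx_map : forall i j, shom i j -> pt_cpx (F i) -> pt_cpx (F j) :=
  fun i j u => (proj1_sig (dmap F u)).2.
Arguments space_map : clear implicits.
Arguments cpx_map : clear implicits.

Lemma phi_natural i j (u : shom i j) x :
  pt_phi (space_map i j u x) = cpx_map i j u (pt_phi x).
Proof. by case: (proj2_sig (dmap F u)) => _ _ ->. Qed.

Lemma space_map_short i j (u : shom i j) : short (space_map i j u).
Proof. by case: (proj2_sig (dmap F u)). Qed.

Lemma cpx_map_simplicial i j (u : shom i j) : simplicial (cpx_map i j u).
Proof. by case: (proj2_sig (dmap F u)). Qed.

Definition space_diagram : Diagram J pMet.
Proof.
refine (@Build_Diagram J pMet (fun j => pt_space (F j))
  (fun i j u => exist _ (space_map i j u) (space_map_short u)) _ _).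
- by move=> i; apply: sig_eq; rewrite /= /space_map dmap_id.
- by move=> i j k u v; apply: sig_eq; rewrite /= /space_map dmap_comp.
Defined.

Definition cpx_diagram : Diagram J sCpx.
Proof.
refine (@Build_Diagram J sCpx (fun j => pt_cpx (F j))
  (fun i j u => exist _ (cpx_map i j u) (cpx_map_simplicial u)) _ _).
- by move=> i; apply: sig_eq; rewrite /= /cpx_map dmap_id.
- by move=> i j k u v; apply: sig_eq; rewrite /= /cpx_map dmap_comp.
Defined.

Lemma cone_components (d : pSMT) (leg : forall j, hom d (F j)) :
  is_cone leg ->
  (forall y, compatible space_map (fun j => (proj1_sig (leg j)).1 y)) /\
  (forall v, compatible cpx_map (fun j => (proj1_sig (leg j)).2 v)).
Proof.
by move=> cone; split=> [y|v] i j u; rewrite -(cone i j u).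
Qed.

Lemma cocone_components (d : pSMT) (leg : forall j, hom (F j) d) :
  is_cocone leg ->
  (forall i j u x,
     (proj1_sig (leg j)).1 (space_map i j u x) = (proj1_sig (leg i)).1 x) /\
  (forall i j u v,
     (proj1_sig (leg j)).2 (cpx_map i j u v) = (proj1_sig (leg i)).2 v).
Proof.
by move=> cocone; split=> i j u x; rewrite -(cocone i j u).
Qed.
End Components.
Arguments space_map {J} F i j u.
Arguments cpx_map {J} F i j u.

Section ThickeningLimit.
Variables (J : SmallCat) (F : Diagram J pSMT)
  (LX : pmet) (pX : forall j, LX -> pt_space (F j))
  (LK : scpx) (pK : forall j, LK -> pt_cpx (F j)).
Hypotheses (X_lim : type_limit (space_map F) pX)
  (K_lim : type_limit (cpx_map F) pK).

Lemma limit_comparison_exists :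
  exists Phi : LX -> LK, forall j x, pK j (Phi x) = pt_phi (pX j x).
Proof.
have [Xcone _ _] := X_lim.
apply: (type_limit_lift K_lim (f := fun j x => pt_phi (pX j x))) => x i j u.
by rewrite /= -phi_natural Xcone.
Qed.

Variables (Phi : LX -> LK) (PhiE : forall j x, pK j (Phi x) = pt_phi (pX j x)).

Lemma limit_comparison_bijective : bijective Phi.
Proof.
have [_ Xinj _] := X_lim; have [Kcone Kinj _] := K_lim.
have [Psi PsiE] :
    exists Psi : LK -> LX, forall j v, pX j (Psi v) = phi_inv (pK j v).
  apply: (type_limit_lift X_lim (f := fun j v => phi_inv (pK j v))) => v i j u.
  by apply: (can_inj (@phiK (F j))); rewrite phi_natural !phi_invK Kcone.
exists Psi => [x|v].
  apply: Xinj => j; apply: (can_inj (@phiK (F j))).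
  by rewrite PsiE phi_invK PhiE.
by apply: Kinj => j; rewrite PhiE PsiE phi_invK.
Qed.

Definition limit_thickening : psmt :=
  {| pt_space := LX; pt_cpx := LK; pt_phi := Phi;
     pt_phi_bij := limit_comparison_bijective |}.

Hypotheses (pX_short : forall j, short (pX j))
  (pK_simplicial : forall j, simplicial (pK j)).

Lemma limit_leg_mor j :
  psmt_mor (A := limit_thickening) (B := F j) (pX j, pK j).
Proof. by split=> // x /=; rewrite PhiE. Qed.

Definition limit_leg j : hom (limit_thickening : pSMT) (F j) :=
  exist _ (pX j, pK j) (limit_leg_mor j).

Lemma limit_leg_cone : is_cone limit_leg.
Proof.
have [Xcone _ _] := X_lim; have [Kcone _ _] := K_lim.
by move=> i j u; apply: psmt_hom_eq => x /=; [exact: Xcone | exact: Kcone].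
Qed.

Hypothesis K_lift : forall (K : scpx) (h : K -> LK),
  (forall j, simplicial (fun v => pK j (h v))) -> simplicial h.

(* The space of the test object d is only required to lift shortness along
   the legs; this is all that distinguishes limits in pSMT from those in SMT. *)
Lemma limit_leg_universal (d : pSMT) (leg' : forall j, hom d (F j)) :
  (forall h : pt_space d -> LX,
     (forall j, short (fun x => pX j (h x))) -> short h) ->
  is_cone leg' ->
  exists! h : hom d (limit_thickening : pSMT),
    forall j, comp (limit_leg j) h = leg' j.
Proof.
move=> X_lift /cone_components [cX cK].
have [_ Xinj _] := X_lim; have [_ Kinj _] := K_lim.
have [hX hXE] := type_limit_lift X_lim cX.
have [hK hKE] := type_limit_lift K_lim cK.
have hmor : psmt_mor (A := d) (B := limit_thickening) (hX, hK).
  split=> /= [||x].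
  - apply: X_lift => j; rewrite (funext (hXE j)).
    by case: (proj2_sig (leg' j)).
  - apply: K_lift => j; rewrite (funext (hKE j)).
    by case: (proj2_sig (leg' j)).
  - apply: Kinj => j; rewrite PhiE hXE hKE.
    by case: (proj2_sig (leg' j)) => _ _ ->.
exists (exist _ _ hmor); split=> [j|h' h'E].
  by apply: psmt_hom_eq => y /=; [exact: hXE | exact: hKE].
apply: psmt_hom_eq => y /=; [apply: Xinj | apply: Kinj] => j.
  by rewrite hXE -(h'E j).
by rewrite hKE -(h'E j).
Qed.
End ThickeningLimit.

Section ThickeningColimit.
Variables (J : SmallCat) (F : Diagram J pSMT)
  (CX : pmet) (iX : forall j, pt_space (F j) -> CX)
  (CK : scpx) (iK : forall j, pt_cpx (F j) -> CK).
(* The index of a leg is not inferred from its argument. *)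
Arguments iX : clear implicits.
Arguments iK : clear implicits.
Hypotheses (X_colim : type_colimit (space_map F) iX)
  (K_colim : type_colimit (cpx_map F) iK).

Lemma colimit_comparison_exists :
  exists Phi : CX -> CK, forall j x, Phi (iX j x) = iK j (pt_phi x).
Proof.
have [_ _ Xfactor] := X_colim; have [Kcocone _ _] := K_colim.
by apply: Xfactor => i j u x; rewrite phi_natural Kcocone.
Qed.

Variables (Phi : CX -> CK) (PhiE : forall j x, Phi (iX j x) = iK j (pt_phi x)).

Lemma colimit_comparison_bijective : bijective Phi.
Proof.
have [Xcocone Xsurj _] := X_colim; have [_ Ksurj Kfactor] := K_colim.
have [Psi PsiE] :
    exists Psi : CK -> CX, forall j v, Psi (iK j v) = iX j (phi_inv v).
  apply: Kfactor => i j u v.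
  by rewrite -{1}[v]phi_invK -phi_natural phiK Xcocone.
exists Psi => c.
  by have [j [x <-]] := Xsurj c; rewrite PhiE PsiE phiK.
by have [j [v <-]] := Ksurj c; rewrite PsiE PhiE phi_invK.
Qed.

Definition colimit_thickening : psmt :=
  {| pt_space := CX; pt_cpx := CK; pt_phi := Phi;
     pt_phi_bij := colimit_comparison_bijective |}.

Hypotheses (iX_short : forall j, short (iX j))
  (iK_simplicial : forall j, simplicial (iK j)).

Lemma colimit_leg_mor j :
  psmt_mor (A := F j) (B := colimit_thickening) (iX j, iK j).
Proof. by split=> // x /=; rewrite PhiE. Qed.

Definition colimit_leg j : hom (F j) (colimit_thickening : pSMT) :=
  exist _ (iX j, iK j) (colimit_leg_mor j).

Lemma colimit_leg_cocone : is_cocone colimit_leg.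
Proof.
have [Xcocone _ _] := X_colim; have [Kcocone _ _] := K_colim.
move=> i j u; apply: psmt_hom_eq => x /=; [exact: Xcocone | exact: Kcocone].
Qed.

Hypotheses
  (X_lift : forall (X : pmet) (h : CX -> X),
     (forall j, short (fun x => h (iX j x))) -> short h)
  (K_lift : forall (K : scpx) (h : CK -> K),
     (forall j, simplicial (fun v => h (iK j v))) -> simplicial h).

Lemma colimit_leg_universal (d : pSMT) (leg' : forall j, hom (F j) d) :
  is_cocone leg' ->
  exists! h : hom (colimit_thickening : pSMT) d,
    forall j, comp h (colimit_leg j) = leg' j.
Proof.
move=> /cocone_components [cX cK].
have [_ Xsurj Xfactor] := X_colim; have [_ Ksurj Kfactor] := K_colim.
have [hX hXE] := Xfactor _ _ cX.
have [hK hKE] := Kfactor _ _ cK.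
have hmor : psmt_mor (A := colimit_thickening) (B := d) (hX, hK).
  split=> /= [||c].
  - apply: X_lift => j; rewrite (funext (hXE j)).
    by case: (proj2_sig (leg' j)).
  - apply: K_lift => j; rewrite (funext (hKE j)).
    by case: (proj2_sig (leg' j)).
  - have [j [x <-]] := Xsurj c; rewrite hXE PhiE hKE.
    by case: (proj2_sig (leg' j)) => _ _ ->.
exists (exist _ _ hmor); split=> [j|h' h'E].
  by apply: psmt_hom_eq => y /=; [exact: hXE | exact: hKE].
apply: psmt_hom_eq => c /=.
  by have [j [x <-]] := Xsurj c; rewrite hXE -(h'E j).
by have [j [v <-]] := Ksurj c; rewrite hKE -(h'E j).
Qed.
End ThickeningColimit.

Lemma pSMT_limit (J : SmallCat) (F : Diagram J pSMT) :
  has_limit (space_diagram F) -> has_limit (cpx_diagram F) -> has_limit F.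
Proof.
move=> [LX [legX /pMet_limit_types [X_lim X_lift]]].
move=> [LK [legK /sCpx_limit_types [K_lim K_lift]]].
have [Phi PhiE] := limit_comparison_exists (F := F) X_lim K_lim.
exists (limit_thickening X_lim K_lim PhiE : pSMT).
exists (limit_leg X_lim K_lim PhiE (fun j => proj2_sig (legX j))
                  (fun j => proj2_sig (legK j))).
split; first exact: limit_leg_cone.
move=> d leg'; apply: limit_leg_universal; [exact: K_lift | exact: X_lift].
Qed.

Lemma pSMT_colimit (J : SmallCat) (F : Diagram J pSMT) :
  has_colimit (space_diagram F) -> has_colimit (cpx_diagram F) -> has_colimit F.
Proof.
move=> [CX [legX /pMet_colimit_types [X_colim X_lift]]].
move=> [CK [legK /sCpx_colimit_types [K_colim K_lift]]].
have [Phi PhiE] := colimit_comparison_exists (F := F) X_colim K_colim.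
exists (colimit_thickening X_colim K_colim PhiE : pSMT).
exists (colimit_leg X_colim K_colim PhiE (fun j => proj2_sig (legX j))
                    (fun j => proj2_sig (legK j))).
split; first exact: colimit_leg_cocone.
move=> d leg'; apply: colimit_leg_universal; [exact: X_lift | exact: K_lift].
Qed.

(* SMT is, definitionally, the full subcategory of pSMT on the metric
   thickenings, so an SMT diagram is a pSMT diagram whose spaces form a
   diagram in Met. *)
Section SMTDiagrams.
Variables (J : SmallCat) (F : Diagram J SMT).

Definition SMT_as_pSMT : Diagram J pSMT :=
  @Build_Diagram J pSMT (fun j => smt_psmt (F j)) (fun i j u => dmap F u)
    (fun i => dmap_id F i) (fun i j k u v => dmap_comp F u v).

Definition metric_space_diagram : Diagram J Met.
Proof.
refine (@Build_Diagram J Met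
  (fun j => {| mspace := pt_space (F j); mspace_metric := smt_metric (F j) |})
  (fun i j u => exist _ (space_map SMT_as_pSMT i j u) (space_map_short u)) _ _).
- by move=> i; apply: sig_eq; rewrite /= /space_map /= dmap_id.
- by move=> i j k u v; apply: sig_eq; rewrite /= /space_map /= dmap_comp.
Defined.
End SMTDiagrams.

Lemma SMT_limit (J : SmallCat) (F : Diagram J SMT) :
  has_limit (metric_space_diagram F) -> has_limit (cpx_diagram (SMT_as_pSMT F)) ->
  has_limit F.
Proof.
move=> [LX [legX /Met_limit_types [X_lim X_lift]]].
move=> [LK [legK /sCpx_limit_types [K_lim K_lift]]].
have [Phi PhiE] := limit_comparison_exists (F := SMT_as_pSMT F) X_lim K_lim.
pose F' := SMT_as_pSMT F.
exists {| smt_psmt := limit_thickening (F := F') X_lim K_lim PhiE;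
          smt_metric := mspace_metric LX |}.
exists (limit_leg (F := F') X_lim K_lim PhiE (fun j => proj2_sig (legX j))
                  (fun j => proj2_sig (legK j))).
split; first exact: limit_leg_cone.
move=> d leg'.
apply: (@limit_leg_universal _ F' _ _ _ _ X_lim K_lim _ PhiE _ _ K_lift d leg').
exact: (X_lift {| mspace := pt_space d; mspace_metric := smt_metric d |}).
Qed.

Local Open Scope ereal_scope.

Section ProductSpace.
Variables (n : nat) (X : 'I_n -> pmet).

Definition prod_dist (x y : forall i, X i) : \bar R :=
  \big[Order.max/0]_(i < n) dist (x i) (y i).

Lemma prod_dist_ge (x y : forall i, X i) i : dist (x i) (y i) <= prod_dist x y.
Proof. exact: le_bigmax. Qed.

Lemma prod_dist_le (x y : forall i, X i) (c : \bar R) :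
  0 <= c -> (forall i, dist (x i) (y i) <= c) -> prod_dist x y <= c.
Proof. by move=> c0 h; apply: bigmax_le. Qed.

Definition prod_pmet : pmet.
Proof.
refine {| pcarrier := forall i, X i; dist := prod_dist |}.
- by move=> x y; apply: bigmax_ge_id.
- move=> x; apply: le_anti; rewrite bigmax_ge_id andbT.
  by apply: prod_dist_le => // i; rewrite dist_self.
- by move=> x y; apply: eq_bigr => i _; rewrite dist_sym.
- move=> x y z; apply: prod_dist_le.
    by apply: adde_ge0; apply: bigmax_ge_id.
  move=> i; apply: le_trans (dist_tri _ (y i) _) _.
  by apply: leeD; apply: prod_dist_ge.
Defined.

Lemma proj_short j : short (fun x : prod_pmet => x j).
Proof. by move=> x y; exact: prod_dist_ge. Qed.

Lemma short_into_prod (D : pmet) (h : D -> prod_pmet) :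
  (forall j, short (fun x => h x j)) -> short h.
Proof.
by move=> hs x y; apply: prod_dist_le => [|i]; [exact: dist_ge0 | exact: hs].
Qed.

Lemma prod_metric : (forall i, is_metric (X i)) -> is_metric prod_pmet.
Proof.
move=> hm; split=> [x y|x y e].
  rewrite /= /prod_dist; elim/big_ind: _ => // [a b fa fb|i _].
    by rewrite maxElt; case: ifP.
  by case: (hm i) => + _; apply.
apply: functional_extensionality_dep => i; case: (hm i) => _; apply.
by apply: le_anti; rewrite dist_ge0 andbT -e; exact: prod_dist_ge.
Qed.
End ProductSpace.

Section CoproductSpace.
Variables (n : nat) (X : 'I_n -> pmet).
Local Notation T := {i : 'I_n & X i}.

Definition coprod_dist (u v : T) : \bar R :=
  if tag u == tag v then dist (tagged u) (tagged_as u v) else +oo.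

Lemma coprod_distE i (x y : X i) :
  coprod_dist (Tagged X x) (Tagged X y) = dist x y.
Proof. by rewrite /coprod_dist eqxx tagged_asE. Qed.

Lemma coprod_distNE i j (x : X i) (y : X j) :
  i != j -> coprod_dist (Tagged X x) (Tagged X y) = +oo.
Proof. by rewrite /coprod_dist /= => /negbTE ->. Qed.

Lemma coprod_dist_ge0 (u v : T) : 0 <= coprod_dist u v.
Proof.
case: u v => [i x] [j y]; have [e|ne] := eqVneq i j; first subst j.
  by rewrite coprod_distE dist_ge0.
by rewrite coprod_distNE // leey.
Qed.

Lemma coprod_dist_neqNy (u v : T) : coprod_dist u v != -oo.
Proof. by rewrite -ltNye (lt_le_trans ltNy0 (coprod_dist_ge0 u v)). Qed.

Definition coprod_pmet : pmet.
Proof.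
refine {| pcarrier := T; dist := coprod_dist; dist_ge0 := coprod_dist_ge0 |}.
- by move=> [i x]; rewrite coprod_distE dist_self.
- move=> [i x] [j y]; have [e|ne] := eqVneq i j; first subst j.
    by rewrite !coprod_distE dist_sym.
  by rewrite !coprod_distNE // eq_sym.
- move=> [i x] [j y] [k z].
  have [e|ne] := eqVneq i j; last first.
    by rewrite (coprod_distNE x y ne) addye ?leey ?coprod_dist_neqNy.
  subst j; have [e|ne] := eqVneq i k; last first.
    by rewrite (coprod_distNE y z ne) addey ?leey ?coprod_dist_neqNy.
  by subst k; rewrite !coprod_distE dist_tri.
Defined.

Lemma inj_short j : short (fun x : X j => Tagged X x : coprod_pmet).
Proof. by move=> x y; rewrite /= coprod_distE. Qed.

Lemma short_from_coprod (D : pmet) (h : coprod_pmet -> D) :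
  (forall j, short (fun x : X j => h (Tagged X x))) -> short h.
Proof.
move=> hs [i x] [j y]; have [e|ne] := eqVneq i j; first subst j.
  by rewrite /= coprod_distE; exact: hs.
by rewrite /= coprod_distNE // leey.
Qed.
End CoproductSpace.
Local Close Scope ereal_scope.

Section ProductComplex.
Variables (n : nat) (K : 'I_n -> scpx).

Definition prod_cpx : scpx.
Proof.
refine {| vertices := forall i, K i;
          simplex := fun s => [/\ s !=set0, finite_set s &
                                forall i, simplex ((fun v => v i) @` s)] |}.
- by move=> s [].
- by move=> s [].
- move=> v; split; [by exists v | exact: finite_set1 |].
  by move=> i; rewrite image_set1; apply: simplex_single.
- move=> s t [s0 fs hs] ts [v tv].
  split; [by exists v | exact: sub_finite_set fs |].
  move=> i; apply: (simplex_sub (hs i)); first exact: image_subset.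
  by exists (v i), v.
Defined.

Lemma proj_simplicial j : simplicial (fun v : prod_cpx => v j).
Proof. by move=> s []. Qed.

Lemma simplicial_into_prod (L : scpx) (h : L -> prod_cpx) :
  (forall j, simplicial (fun v => h v j)) -> simplicial h.
Proof.
move=> hs s Ls; split; last by move=> i; rewrite image_comp; exact: hs.
  by case: (simplex_nonempty Ls) => v sv; exists (h v), v.
exact/finite_image/simplex_finite.
Qed.
End ProductComplex.

Section CoproductComplex.
Variables (n : nat) (K : 'I_n -> scpx).

Definition coprod_cpx : scpx.
Proof.
refine {| vertices := {i : 'I_n & K i};
          simplex := fun s => exists i (t : set (K i)),
                       simplex t /\ s = Tagged K @` t |}.
- move=> s [i [t [Kt ->]]]; case: (simplex_nonempty Kt) => x tx.
  by exists (Tagged K x), x.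
- by move=> s [i [t [Kt ->]]]; exact/finite_image/simplex_finite.
- move=> [i x]; exists i, [set x]; split; first exact: simplex_single.
  by rewrite image_set1.
- move=> s t [i [u [Ku ->]]] tsub [w tw].
  exists i, [set x | t (Tagged K x)]; split.
    apply: (simplex_sub Ku).
      move=> x /= tx; case: (tsub _ tx) => y uy ey.
      by rewrite -(eq_from_Tagged ey).
    by case: (tsub _ tw) => y uy ey; exists y; rewrite /= ey.
  apply/seteqP; split=> [v tv|v [y /= ty <-] //].
  by case: (tsub _ tv) => y uy ey; exists y; rewrite //= ey.
Defined.

Lemma inj_simplicial j : simplicial (fun v : K j => Tagged K v : coprod_cpx).
Proof. by move=> s Ks; exists j, s. Qed.

Lemma simplicial_from_coprod (L : scpx) (h : coprod_cpx -> L) :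
  (forall j, simplicial (fun v : K j => h (Tagged K v))) -> simplicial h.
Proof. by move=> hs s [i [t [Kt ->]]]; rewrite image_comp; exact: hs. Qed.
End CoproductComplex.

Section FiniteLimits.
Variable n : nat.

Lemma underlying_discrete_id (O : Type) (car : O -> Type) P P_id P_comp
  (G : Diagram (discrete_cat n) (@concrete_cat O car P P_id P_comp)) i x :
  underlying G i i (sidm i) x = x.
Proof. by rewrite /underlying dmap_id. Qed.

Lemma pMet_finite_products : has_limits_of_shape (discrete_cat n) pMet.
Proof.
move=> G; pose X := prod_pmet (fun i => G i).
exists (X : pMet), (fun j => exist _ _ (proj_short j)).
apply: (@concrete_limit pmet pcarrier (fun X Y f => short f) short_id
  (fun X Y Z g f => @short_comp X Y Z g f) _ G X).
  exact/discrete_product/underlying_discrete_id.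
by move=> d h; exact: short_into_prod.
Qed.

Lemma Met_finite_products : has_limits_of_shape (discrete_cat n) Met.
Proof.
move=> G; pose X := {| mspace := prod_pmet (fun i => G i);
  mspace_metric := prod_metric (fun i => mspace_metric (G i)) |}.
exists (X : Met), (fun j => exist _ _ (proj_short j)).
apply: (@concrete_limit met (fun X => pcarrier X) (fun X Y f => short f)
  (fun X : met => @short_id X) (fun X Y Z g f => @short_comp X Y Z g f) _ G X).
  exact/discrete_product/underlying_discrete_id.
by move=> d h; exact: short_into_prod.
Qed.

Lemma sCpx_finite_products : has_limits_of_shape (discrete_cat n) sCpx.
Proof.
move=> G; pose K := prod_cpx (fun i => G i).
exists (K : sCpx), (fun j => exist _ _ (proj_simplicial j)).
apply: (@concrete_limit scpx vertices (fun K L g => simplicial g)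
  simplicial_id (fun K L M g f => @simplicial_comp K L M g f) _ G K).
  exact/discrete_product/underlying_discrete_id.
by move=> d h; exact: simplicial_into_prod.
Qed.

Lemma pMet_finite_coproducts : has_colimits_of_shape (discrete_cat n) pMet.
Proof.
move=> G; pose X := coprod_pmet (fun i => G i).
exists (X : pMet), (fun j => exist _ _ (@inj_short n (fun i => G i) j)).
apply: (@concrete_colimit pmet pcarrier (fun X Y f => short f) short_id
  (fun X Y Z g f => @short_comp X Y Z g f) _ G X).
  exact/discrete_coproduct/underlying_discrete_id.
by move=> d h; exact: short_from_coprod.
Qed.

Lemma sCpx_finite_coproducts : has_colimits_of_shape (discrete_cat n) sCpx.
Proof.
move=> G; pose K := coprod_cpx (fun i => G i).
exists (K : sCpx), (fun j => exist _ _ (@inj_simplicial n (fun i => G i) j)).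
apply: (@concrete_colimit scpx vertices (fun K L g => simplicial g)
  simplicial_id (fun K L M g f => @simplicial_comp K L M g f) _ G K).
  exact/discrete_coproduct/underlying_discrete_id.
by move=> d h; exact: simplicial_from_coprod.
Qed.
End FiniteLimits.

Theorem proposition4p10 :
  (forall J : SmallCat,
      has_limits_of_shape J pMet -> has_limits_of_shape J sCpx ->
      has_limits_of_shape J pSMT) /\
  (forall J : SmallCat,
      has_colimits_of_shape J pMet -> has_colimits_of_shape J sCpx ->
      has_colimits_of_shape J pSMT) /\
  (forall J : SmallCat,
      has_limits_of_shape J Met -> has_limits_of_shape J sCpx ->
      has_limits_of_shape J SMT) /\
  has_finite_products pSMT /\ has_finite_coproducts pSMT /\
  has_finite_products SMT.
Proof.
split; [|split; [|split; [|split; [|split]]]].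
- by move=> J hX hK F; apply: pSMT_limit.
- by move=> J hX hK F; apply: pSMT_colimit.
- by move=> J hX hK F; apply: SMT_limit.
- move=> n F; apply: pSMT_limit.
    exact: pMet_finite_products.
  exact: sCpx_finite_products.
- move=> n F; apply: pSMT_colimit.
    exact: pMet_finite_coproducts.
  exact: sCpx_finite_coproducts.
- move=> n F; apply: SMT_limit.
    exact: Met_finite_products.
  exact: sCpx_finite_products.
Qed.
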